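(* Let an FCA with state set $S$, neighborhood $m=l+1+r$, local rule $f$ and boundary type $b\in\{\text{null},\text{periodic}\}$ be given, and let $G$ be its reversibility graph. Suppose $N$ is a negative vertex of $G$ with value $k\ge1$ and two circuits of lengths $r_1,r_2$ pass through $N$, with $\gcd(r_1,r_2)=1$. Then the FCA is not $n$-cell-reversible for every integer $n>k+r_1r_2-r_1-r_2$.
   Context: A one-dimensional finite cellular automaton (FCA) is given by a state set $S=\{0,1,\dots,s-1\}$, integers $l,r\ge 0$ with neighborhood size $m=l+1+r\ge 2$, a local rule $f:S^m\to S$, and a boundary type $b\in\{\text{null},\text{periodic}\}$. For $n\ge 1$ the global map $\tau_n:S^n\to S^n$ sends $(x_0,\dots,x_{n-1})$ to $(y_0,\dots,y_{n-1})$ with $y_i=f(x_{i-l},\dots,x_{i+r})$, where for the null boundary $x_j=0$ whenever $j<0$ or $j>n-1$, and for the periodic boundary indices are taken modulo $n$. The FCA is $n$-cell-reversible if $\tau_n$ is a bijection (equivalently, since $S^n$ is finite, surjective). Reversibility graph (RG). Null boundary: vertices are subsets of $S^{m-1}$; the root is $N_0=\{(a_1,\dots,a_{m-1})\in S^{m-1}: a_1=\dots=a_l=0\}$; the acceptance set is $R=\{(a_1,\dots,a_{m-1})\in S^{m-1}: a_{m-r}=\dots=a_{m-1}=0\}$ (so $R=S^{m-1}$ if $r=0$); for a subset $N$ and $c\in S$, $\delta(N,c)=\{(a_1,\dots,a_{m-1})\in S^{m-1}:\exists a_0\in S,\ (a_0,\dots,a_{m-2})\in N,\ f(a_0,a_1,\dots,a_{m-1})=c\}$.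 Periodic boundary: vertices are subsets of $S^{m-1}\times S^{m-1}$; the root and the acceptance set are $N_0=R=\{(a,a):a\in S^{m-1}\}$; $\delta(N,c)=\{((a_1,\dots,a_{m-1}),(b_1,\dots,b_{m-1})):\exists b_0\in S,\ ((a_1,\dots,a_{m-1}),(b_0,\dots,b_{m-2}))\in N,\ f(b_0,\dots,b_{m-1})=c\}$. In both cases the RG is the directed graph whose vertex set consists of all subsets obtainable from $N_0$ by repeatedly applying $\delta$ (including $N_0$; equal subsets are the same vertex; the empty set may occur), with, for each vertex $N$ and each $c\in S$, an edge labelled $c$ from $N$ to $\delta(N,c)$. The value of a vertex $N$ is the length of a shortest directed path from $N_0$ to $N$. A vertex $N$ is negative if $N\cap R=\emptyset$. A circuit is an elementary directed cycle of the RG (a closed directed path with no repeated vertex other than its start = end; a loop is a circuit of length $1$); its length is its number of edges, and it passes through $N$ if $N$ is one of its vertices. *)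

From mathcomp Require Import all_boot.
Set Implicit Arguments.
Unset Strict Implicit.
Unset Printing Implicit Defensive.

Inductive boundary := NullB | PeriodicB.

Section FCA.
(* state set S = {0,...,s-1} = 'I_s (s >= 1 so that the state 0 exists) *)
Variables (s : nat) (hs : 0 < s) (l r : nat).
Local Notation S := 'I_s.
Definition zeroS : S := Ordinal hs.

(* local rule f : S^m -> S with m = l + 1 + r = (l + r).+1 *)
Variable f : (l + r).+1.-tuple S -> S.

Definition cfg (n : nat) := {ffun 'I_n -> S}.

(* x_j for a nat index j, 0 if j is out of range [0, n-1] *)
Definition x_at (n : nat) (x : cfg n) (j : nat) : S :=
  if (insub j : option 'I_n) is Some i then x i else zeroS.

(* neighborhood (x_{i-l}, ..., x_{i+r}); entry k is x_{i-l+k} *)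
Definition nbhd (b : boundary) (n : nat) (x : cfg n) (i : 'I_n)
  : (l + r).+1.-tuple S :=
  match b with
  | NullB =>
      [tuple (if i + k < l then zeroS else x_at x (i + k - l)) | k < (l + r).+1]
  | PeriodicB =>
      (* (i - l + k) mod n, computed as (i + k + (n-1) l) mod n (n >= 1) *)
      [tuple x_at x ((i + k + (n - 1) * l) %% n) | k < (l + r).+1]
  end.

Definition tau (b : boundary) (n : nat) (x : cfg n) : cfg n :=
  [ffun i => f (nbhd b x i)].

Definition reversible (b : boundary) (n : nat) : Prop := bijective (@tau b n).

(* elements of S^(m-1) are (l + r).-tuples; tuple index k is a_(k+1) *)
Definition shift (a0 : S) (a : (l + r).-tuple S) : (l + r).-tuple S :=
  [tuple nth a0 (a0 :: a) k | k < l + r].   (* (a0, a_1, ..., a_(m-2)) *)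

Definition root_null : {set (l + r).-tuple S} :=
  [set a | [forall k : 'I_(l + r), (k < l) ==> (tnth a k == zeroS)]].
Definition acc_null : {set (l + r).-tuple S} :=
  [set a | [forall k : 'I_(l + r), (l <= k) ==> (tnth a k == zeroS)]].
Definition step_null (N : {set (l + r).-tuple S}) (c : S)
  : {set (l + r).-tuple S} :=
  [set a | [exists a0 : S, (shift a0 a \in N) && (f (cons_tuple a0 a) == c)]].

Definition root_per : {set (l + r).-tuple S * (l + r).-tuple S} :=
  [set p | p.1 == p.2].
Definition step_per (N : {set (l + r).-tuple S * (l + r).-tuple S}) (c : S)
  : {set (l + r).-tuple S * (l + r).-tuple S} :=
  [set p | [exists b0 : S,
      ((p.1, shift b0 p.2) \in N) && (f (cons_tuple b0 p.2) == c)]].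

End FCA.

Record RGdata (S : Type) := {
  rg_base : finType;
  rg_root : {set rg_base};
  rg_acc : {set rg_base};
  rg_step : {set rg_base} -> S -> {set rg_base} }.

Definition RG (s : nat) (hs : 0 < s) (l r : nat)
  (f : (l + r).+1.-tuple 'I_s -> 'I_s) (b : boundary) : RGdata 'I_s :=
  match b with
  | NullB => @Build_RGdata 'I_s _ (root_null hs l r) (acc_null hs l r) (step_null f)
  | PeriodicB => @Build_RGdata 'I_s _ (@root_per s l r) (@root_per s l r) (step_per f)
  end.

Section Graph.
Variables (S : Type) (D : RGdata S).
Local Notation V := {set rg_base D}.

Definition run (w : seq S) : V := foldl (@rg_step S D) (@rg_root S D) w.

Definition is_vertex (N : V) : Prop := exists w : seq S, run w = N.

Definition edge (N N' : V) : Prop := exists c : S, @rg_step S D N c = N'.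

(* value of N: length of a shortest directed path from the root to N
   (directed paths from the root correspond to label words) *)
Definition value (N : V) (k : nat) : Prop :=
  (exists w : seq S, size w = k /\ run w = N) /\
  (forall w : seq S, run w = N -> k <= size w).

Definition negative (N : V) : Prop := N :&: @rg_acc S D = set0.

(* circuit: elementary directed cycle v_0 -> v_1 -> ... -> v_(L-1) -> v_0,
   L >= 1, given as the duplicate-free list of its vertices; its length
   (number of edges) is L = size p *)
Definition circuit (p : seq V) : Prop :=
  [/\ 0 < size p, uniq p, (forall N, N \in p -> is_vertex N) &
      forall i, i < size p ->
        edge (nth set0 p i) (nth set0 p ((i + 1) %% size p))].

End Graph.

(* If tau_n were surjective, every label word w of length n would be the image
   tau_n(x) of some configuration x, and reading w along the reversibility
   graph would carry the successive windows of x from the root into an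
   accepting state; so no word of length n leads to a negative vertex.  But a
   shortest word of length k leads to N, and since r1 and r2 are coprime every
   length d with r1 r2 < d + r1 + r2 is a sum a r1 + b r2, which we can add by
   going a times around the first circuit and b times around the second. *)
From mathcomp Require Import all_boot zify.
Set Implicit Arguments.
Unset Strict Implicit.
Unset Printing Implicit Defensive.

Lemma frobenius_coin r1 r2 d : 0 < r1 -> 0 < r2 -> coprime r1 r2 ->
  r1 * r2 < d + r1 + r2 -> exists a b, d = a * r1 + b * r2.
Proof.
move=> r1_gt0 r2_gt0 co_r12 large_d.
(* c is the multiple of r1 below r1 * r2 that is congruent to d modulo r2 *)
set c := chinese r1 r2 0 d %% (r1 * r2).
have c_mod1 : c %% r1 = 0.
  by rewrite /c modn_dvdm ?dvdn_mulr // chinese_modl // mod0n.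
have c_mod2 : c %% r2 = d %% r2.
  by rewrite /c modn_dvdm ?dvdn_mull // chinese_modr.
have c_lt : c < r1 * r2 by rewrite ltn_mod muln_gt0 r1_gt0.
have [a c_eq] : exists a, c = a * r1.
  by exists (c %/ r1); rewrite {1}(divn_eq c r1) c_mod1 addn0.
have a_lt : a < r2 by rewrite -(ltn_pmul2r r1_gt0) -c_eq mulnC.
have d_eq := divn_eq d r2; have c_div := divn_eq c r2.
rewrite c_mod2 in c_div.
have c_le_d : c %/ r2 <= d %/ r2.
  rewrite leqNgt; apply/negP => lt_quo.
  have : (d %/ r2).+1 * r2 <= c %/ r2 * r2 by rewrite leq_mul2r lt_quo orbT.
  nia.
by exists a, (d %/ r2 - c %/ r2); rewrite -c_eq mulnBl; nia.
Qed.

Lemma foldl_invariant (T A : Type) (step : T -> A -> T) (P : nat -> T -> Prop)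
    (t0 : T) (x0 : A) (w : seq A) :
  P 0 t0 -> (forall j t, j < size w -> P j t -> P j.+1 (step t (nth x0 w j))) ->
  P (size w) (foldl step t0 w).
Proof.
elim/last_ind: w => [//|w c IHw] P0 PS.
rewrite foldl_rcons size_rcons.
have -> : c = nth x0 (rcons w c) (size w) by rewrite nth_rcons ltnn eqxx.
apply: (PS); first by rewrite size_rcons.
apply: IHw => // j t lt_j_w Pjt.
by have := PS j t; rewrite size_rcons nth_rcons lt_j_w ltnW //; apply.
Qed.

Lemma nth_mktuple_nat (T : Type) n (F : nat -> T) x0 j : j < n ->
  nth x0 [tuple F k | k < n] j = F j.
Proof.
by move=> lt_j_n; have := nth_mktuple (fun k : 'I_n => F k) x0 (Ordinal lt_j_n).
Qed.

Section Closed_walks.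
Variables (S : Type) (D : RGdata S).
Local Notation V := {set rg_base D}.

Definition walk (N : V) (u : seq S) : V := foldl (@rg_step S D) N u.

Lemma walk_cat N u v : walk N (u ++ v) = walk (walk N u) v.
Proof. exact: foldl_cat. Qed.

Lemma run_cat w u : run D (w ++ u) = walk (run D w) u.
Proof. exact: foldl_cat. Qed.

Definition closed_walk (N : V) (L : nat) : Prop :=
  exists u, size u = L /\ walk N u = N.

Lemma closed_walkD N L1 L2 :
  closed_walk N L1 -> closed_walk N L2 -> closed_walk N (L1 + L2).
Proof.
move=> [u1 [<- walk_u1]] [u2 [<- walk_u2]].
by exists (u1 ++ u2); rewrite size_cat walk_cat walk_u1.
Qed.

Lemma closed_walkM N L a : closed_walk N L -> closed_walk N (a * L).
Proof.
move=> walk_L; elim: a => [|a IHa]; first by exists [::].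
by rewrite mulSn; apply: closed_walkD.
Qed.

Lemma circuit_closed_walk (c : seq V) N :
  circuit c -> N \in c -> closed_walk N (size c).
Proof.
move=> [c_gt0 _ _ c_edge] N_in_c.
have walk_along t : exists u, size u = t /\
    walk N u = nth set0 c ((index N c + t) %% size c).
  elim: t => [|t [u [size_u walk_u]]].
    by exists [::]; rewrite addn0 modn_small ?nth_index ?index_mem.
  have [a step_a] := c_edge _ (ltn_pmod (index N c + t) c_gt0).
  exists (rcons u a); rewrite size_rcons size_u /walk foldl_rcons -/(walk _ _).
  by rewrite walk_u step_a modnDml addn1 addnS.
have [u [size_u walk_u]] := walk_along (size c).
by exists u; rewrite walk_u modnDr modn_small ?nth_index ?index_mem.
Qed.

Lemma closed_walk_coprime N r1 r2 d :
  closed_walk N r1 -> closed_walk N r2 -> 0 < r1 -> 0 < r2 -> coprime r1 r2 ->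
  r1 * r2 < d + r1 + r2 -> closed_walk N d.
Proof.
move=> walk_r1 walk_r2 r1_gt0 r2_gt0 co_r12 large_d.
have [a [b ->]] := frobenius_coin r1_gt0 r2_gt0 co_r12 large_d.
by apply: closed_walkD; apply: closed_walkM.
Qed.

End Closed_walks.

Section Windows.
Variables (s : nat) (l r : nat) (X : nat -> 'I_s).

Definition window j : (l + r).-tuple 'I_s := [tuple X (j + k) | k < l + r].

Lemma shift_window j : shift (X j) (window j.+1) = window j.
Proof.
apply: eq_from_tnth => i; rewrite !tnth_mktuple.
case: i => [[|i] lt_i] /=; first by rewrite addn0.
by rewrite -addSnnS (nth_mktuple_nat (fun k => X (j.+1 + k))) // ltnW.
Qed.

Lemma cons_window j :
  cons_tuple (X j) (window j.+1) = [tuple X (j + k) | k < (l + r).+1].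
Proof.
apply: eq_from_tnth => i; rewrite (tnth_nth (X 0)) tnth_mktuple.
case: i => [[|i] lt_i] /=; first by rewrite addn0.
by rewrite -addSnnS (nth_mktuple_nat (fun k => X (j.+1 + k))).
Qed.

End Windows.

Section Image_runs.
Variables (s : nat) (hs : 0 < s) (l r : nat).
Variable f : (l + r).+1.-tuple 'I_s -> 'I_s.
Local Notation zero := (zeroS hs).

(* x padded with l zeros on the left and infinitely many on the right *)
Definition null_padding n (x : cfg s n) (j : nat) : 'I_s :=
  if j < l then zero else x_at hs x (j - l).

(* t |-> x_((t - l) mod n) *)
Definition periodic_extension n (x : cfg s n) (t : nat) : 'I_s :=
  x_at hs x ((t + (n - 1) * l) %% n).

Lemma run_image_null n (x : cfg s n) w : size w = n ->
    (forall i : 'I_n, tau hs f NullB x i = nth zero w i) ->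
  run (RG hs f NullB) w :&: acc_null hs l r != set0.
Proof.
move=> size_w tau_x; apply/set0Pn; exists (window l r (null_padding x) n).
rewrite inE; apply/andP; split.
  suff : window l r (null_padding x) (size w) \in run (RG hs f NullB) w.
    by rewrite size_w.
  rewrite /run /=; apply: (@foldl_invariant _ _ _
      (fun j (N : {set _}) => window l r (null_padding x) j \in N) _ zero)
    => [|j N lt_j_w in_N].
    rewrite inE; apply/forallP => k; apply/implyP => lt_k_l.
    by rewrite tnth_mktuple /null_padding add0n lt_k_l.
  rewrite size_w in lt_j_w.
  rewrite inE; apply/existsP; exists (null_padding x j).
  rewrite shift_window in_N cons_window -(tau_x (Ordinal lt_j_w)) ffunE.
  by apply/eqP; congr f; apply: eq_mktuple.
rewrite inE; apply/forallP => k; apply/implyP => le_l_k.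
rewrite tnth_mktuple /null_padding ltnNge (leq_trans le_l_k (leq_addl _ _)) /=.
by rewrite /x_at insubN // -leqNgt; lia.
Qed.

Lemma run_image_periodic n (x : cfg s n) w : size w = n ->
    (forall i : 'I_n, tau hs f PeriodicB x i = nth zero w i) ->
  run (RG hs f PeriodicB) w :&: @root_per s l r != set0.
Proof.
move=> size_w tau_x; set X := periodic_extension x.
have window_n : window l r X n = window l r X 0.
  by apply: eq_mktuple => k; rewrite /X /periodic_extension -addnA modnDl.
apply/set0Pn; exists (window l r X 0, window l r X n).
rewrite inE; apply/andP; split; last by rewrite inE /= window_n.
suff : (window l r X 0, window l r X (size w)) \in run (RG hs f PeriodicB) w.
  by rewrite size_w.
rewrite /run /=; apply: (@foldl_invariant _ _ _
    (fun j (N : {set _}) => (window l r X 0, window l r X j) \in N) _ zero)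
  => [|j N lt_j_w in_N].
  by rewrite inE.
rewrite size_w in lt_j_w.
rewrite inE; apply/existsP; exists (X j) => /=.
rewrite shift_window in_N cons_window -(tau_x (Ordinal lt_j_w)) ffunE.
by apply/eqP; congr f; apply: eq_mktuple.
Qed.

Lemma reversible_run_nonnegative b n :
  reversible hs f b n -> forall w, size w = n -> ~ negative (run (RG hs f b) w).
Proof.
move=> [g _ gK] w size_w.
have [x tau_x] : exists x : cfg s n, forall i, tau hs f b x i = nth zero w i.
  by exists (g [ffun i : 'I_n => nth zero w i]) => i; rewrite gK ffunE.
clear gK; rewrite /negative; apply/eqP.
case: b x tau_x => x tau_x.
  exact: run_image_null tau_x.
exact: run_image_periodic tau_x.
Qed.

End Image_runs.

Theorem corollary2 (s : nat) (hs : 0 < s) (l r : nat) (hm : 2 <= (l + r).+1)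
  (f : (l + r).+1.-tuple 'I_s -> 'I_s) (b : boundary)
  (N : {set rg_base (RG hs f b)}) (k r1 r2 : nat)
  (c1 c2 : seq {set rg_base (RG hs f b)}) :
  is_vertex N -> negative N -> value N k -> 1 <= k ->
  circuit c1 -> N \in c1 -> size c1 = r1 ->
  circuit c2 -> N \in c2 -> size c2 = r2 ->
  coprime r1 r2 ->
  forall n : nat, k + r1 * r2 < n + r1 + r2 -> ~ reversible hs f b n.
Proof.
move=> _ neg_N [[w [size_w run_w]] _] _ c1_circ N_c1 size_c1
  c2_circ N_c2 size_c2 co_r12 n large_n rev_n.
have r1_gt0 : 0 < r1 by rewrite -size_c1; case: c1_circ.
have r2_gt0 : 0 < r2 by rewrite -size_c2; case: c2_circ.
have [u [size_u walk_u]] : closed_walk N (n - k).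
  apply: (closed_walk_coprime _ _ r1_gt0 r2_gt0 co_r12); last by nia.
  - by rewrite -size_c1; apply: circuit_closed_walk.
  - by rewrite -size_c2; apply: circuit_closed_walk.
apply: (reversible_run_nonnegative rev_n (w := w ++ u)).
  by rewrite size_cat size_w size_u; nia.
by rewrite run_cat run_w walk_u.
Qed.
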